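(* Let $F$ be a CNF formula with $n$ variables and clauses $C_1,\dots,C_m$, and let $A_F,B_F\subseteq\{0,1\}^m$ be defined as follows. Partition the variables into a first half $X_1$ and a second half $X_2$. For each assignment $\alpha$ to $X_1$, let $a^\alpha\in\{0,1\}^m$ have $a^\alpha_j=1$ iff $\alpha$ does not satisfy clause $C_j$ (no literal of $C_j$ over $X_1$ is made true by $\alpha$), and let $A_F=\{a^\alpha\}$; define $B_F$ analogously from assignments to $X_2$. Then $F$ is unsatisfiable if and only if there exists a monotone Boolean function $h\colon\{0,1\}^m\to\{0,1\}$ with $A_F\subseteq h^{-1}(1)$ and $\overline{B_F}\subseteq h^{-1}(0)$.
   Context: For $v\in\{0,1\}^m$, $\overline{v}$ is the vector obtained by flipping every coordinate, and $\overline{V}=\{\overline{v}:v\in V\}$. A Boolean function $h$ is monotone if $h(u)\ge h(v)$ whenever $u_i\ge v_i$ for all $i$. *)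

From mathcomp Require Import all_boot.
Set Implicit Arguments. Unset Strict Implicit. Unset Printing Implicit Defensive.

(* A literal is a pair (i, b) : 'I_n * bool;
   (i, true) is the literal x_i and (i, false) is the literal ~x_i. *)
Definition lit (n : nat) := ('I_n * bool)%type.
Definition clause (n : nat) := {set lit n}.
Definition cnf (n m : nat) := 'I_m -> clause n.

Definition assignment (n : nat) := {ffun 'I_n -> bool}.

Definition lit_true n (x : assignment n) (l : lit n) : bool := x l.1 == l.2.

Definition satisfiable n m (F : cnf n m) : Prop :=
  exists x : assignment n, forall j : 'I_m, exists2 l, l \in F j & lit_true x l.

Definition X1 (n : nat) : {set 'I_n} := [set i : 'I_n | i < n./2].
Definition X2 (n : nat) : {set 'I_n} := ~: X1 n.

(* a^alpha for an assignment alpha to the variables in X (values of alpha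
   outside X are ignored): coordinate j is 1 iff no literal of C_j over X is
   made true by alpha. *)
Definition avec n m (F : cnf n m) (X : {set 'I_n}) (alpha : assignment n)
  : {ffun 'I_m -> bool} :=
  [ffun j => ~~ [exists l in F j, (l.1 \in X) && lit_true alpha l]].

Definition AF n m (F : cnf n m) : {set {ffun 'I_m -> bool}} :=
  [set avec F (X1 n) alpha | alpha : assignment n].
Definition BF n m (F : cnf n m) : {set {ffun 'I_m -> bool}} :=
  [set avec F (X2 n) alpha | alpha : assignment n].

Definition flipv m (v : {ffun 'I_m -> bool}) : {ffun 'I_m -> bool} :=
  [ffun i => ~~ v i].

Definition monotone m (h : {ffun 'I_m -> bool} -> bool) : Prop :=
  forall u v : {ffun 'I_m -> bool}, (forall i, v i <= u i) -> h v <= h u.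

(* If a^alpha <= ~b^beta coordinatewise, then every clause has a literal over X1
   made true by alpha or one over X2 made true by beta, so gluing alpha on X1
   with beta on X2 satisfies F; conversely a satisfying x gives a^x <= ~b^x.
   Hence F is unsatisfiable iff no point of A_F lies below a point of ~B_F,
   i.e. iff the upward closure of A_F, which is monotone, avoids ~B_F. *)

From mathcomp Require Import all_boot.

Set Implicit Arguments.
Unset Strict Implicit.
Unset Printing Implicit Defensive.

Definition models n m (x : assignment n) (F : cnf n m) : Prop :=
  forall j, exists2 l, l \in F j & lit_true x l.

Section Gluing.

Variables (n : nat) (X : {set 'I_n}).

Definition glue (alpha beta : assignment n) : assignment n :=
  [ffun i => if i \in X then alpha i else beta i].

Lemma glue_id (x : assignment n) : glue x x = x.
Proof. by apply/ffunP => i; rewrite ffunE if_same. Qed.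

Lemma lit_true_glue alpha beta (l : lit n) :
  lit_true (glue alpha beta) l =
  if l.1 \in X then lit_true alpha l else lit_true beta l.
Proof. by rewrite /lit_true ffunE; case: ifP. Qed.

Lemma clause_true_glue alpha beta (C : clause n) :
  [exists l in C, lit_true (glue alpha beta) l] =
  [exists l in C, (l.1 \in X) && lit_true alpha l]
  || [exists l in C, (l.1 \in ~: X) && lit_true beta l].
Proof.
apply/existsP/orP => [[l /andP[lC]] | ].
  rewrite lit_true_glue; case: ifP => lX l_true.
    by left; apply/existsP; exists l; rewrite lC lX.
  by right; apply/existsP; exists l; rewrite lC in_setC lX.
case=> /existsP[l /and3P[lC lX l_true]]; exists l; rewrite lC lit_true_glue //.
  by rewrite lX.
by move: lX; rewrite in_setC => /negbTE ->.
Qed.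

Lemma avec_le_flipv_avec m (F : cnf n m) alpha beta :
  (forall j, avec F X alpha j <= flipv (avec F (~: X) beta) j)
  <-> models (glue alpha beta) F.
Proof.
have le_glue j : (avec F X alpha j <= flipv (avec F (~: X) beta) j)
                 = [exists l in F j, lit_true (glue alpha beta) l].
  rewrite clause_true_glue /flipv !ffunE.
  by case: [exists l in F j, _ && lit_true alpha l];
    case: [exists l in F j, _ && lit_true beta l].
split=> [le j | sat j].
  by move: (le j); rewrite le_glue => /existsP[l /andP[]]; exists l.
by rewrite le_glue; case: (sat j) => l lF l_true; apply/existsP; exists l; rewrite lF.
Qed.

End Gluing.

Definition upclosure m (A : {set {ffun 'I_m -> bool}}) (v : {ffun 'I_m -> bool}) :=
  [exists a in A, [forall i, a i <= v i]].

Lemma upclosure_monotone m (A : {set {ffun 'I_m -> bool}}) : monotone (upclosure A).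
Proof.
move=> u v le_vu.
have [/existsP[a /andP[aA /forallP le_av]] | //] := boolP (upclosure A v).
rewrite lt0b; apply/existsP; exists a; rewrite aA.
by apply/forallP => i; apply: leq_trans (le_vu i).
Qed.

Lemma mem_upclosure m (A : {set {ffun 'I_m -> bool}}) a : a \in A -> upclosure A a.
Proof. by move=> aA; apply/existsP; exists a; rewrite aA; apply/forallP. Qed.

Theorem lemma18 (n m : nat) (F : cnf n m) :
  ~ satisfiable F <->
  exists h : {ffun 'I_m -> bool} -> bool,
    [/\ monotone h,
        (forall a, a \in AF F -> h a = true) &
        (forall b, b \in BF F -> h (flipv b) = false)].
Proof.
split=> [unsat | [h [h_mono hA hB]] [x x_sat]].
  exists (upclosure (AF F)); split.
  - exact: upclosure_monotone.
  - exact: mem_upclosure.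
  move=> _ /imsetP[beta _ ->]; apply/negbTE/existsP.
  case=> _ /andP[/imsetP[alpha _ ->] /forallP le_ab].
  by apply: unsat; exists (glue (X1 n) alpha beta); apply/avec_le_flipv_avec.
have le_x : forall j, avec F (X1 n) x j <= flipv (avec F (X2 n) x) j.
  by apply/avec_le_flipv_avec; rewrite glue_id.
by have := h_mono _ _ le_x; rewrite hA ?hB ?imset_f.
Qed.
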